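(* Let $\{\psi_j\}_{j\ge1}$ be the Fourier basis of $L^2([0,1])$: $\psi_1\equiv1$, $\psi_{2j}(t)=\sqrt2\cos(2\pi jt)$, $\psi_{2j+1}(t)=\sqrt2\sin(2\pi jt)$ for $j\in\mathbb N$. For $j,k\in\mathbb N$ let $\Lambda_{j,k}=\log(2(j\vee k))$. There exists a constant $c_{L,W}>0$, independent of $j$ and $k$, such that for all $j,k\in\mathbb N$ and all $\epsilon\in(0,1/2)$ there exists a deep ReLU network $\widetilde\Psi_{jk}:[0,1]^2\to\mathbb R$ of depth $L\le c_{L,W}\Lambda_{j,k}\log^2(1/\epsilon)$ and width $W\le c_{L,W}\Lambda_{j,k}\log^3(1/\epsilon)$ satisfying \[ \sup_{(s,t)\in[0,1]^2}\big|\psi_j(s)\psi_k(t)-\widetilde\Psi_{jk}(s,t)\big|\le\epsilon . \]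
   Context: A deep ReLU network of depth $L$ and width $W$ is a map of the form $x\mapsto A_L\sigma_{b_L}A_{L-1}\cdots A_1\sigma_{b_1}A_0x$ with matrices $A_l$ having at most $W$ rows/columns in hidden layers, bias vectors $b_l$, and $\sigma_b(y)=(\max\{y_i-b_i,0\})_i$. *)

From HB Require Import structures.
From mathcomp Require Import all_boot all_order all_algebra.
From mathcomp Require Import all_classical all_reals.
From mathcomp Require Import exp trigo.
Set Implicit Arguments. Unset Strict Implicit. Unset Printing Implicit Defensive.
Import Order.TTheory GRing.Theory Num.Theory.
Local Open Scope ring_scope.

(* A deep ReLU network with input dimension n and output dimension 1:
   x |-> A_L sigma_{b_L} A_{L-1} ... A_1 sigma_{b_1} A_0 x.
   [RNlayer A b N] first applies the affine-free map x |-> A x (A : m x n),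
   then the shifted ReLU sigma_b(y) = (max(y_i - b_i, 0))_i, then the
   network N (on input dimension m).  [RNout A] is the final linear map A_L. *)
Inductive relu_net (R : Type) : nat -> Type :=
| RNout n of 'M[R]_(1, n) : relu_net R n
| RNlayer n m of 'M[R]_(m, n) & 'cV[R]_m & relu_net R m : relu_net R n.

Definition sigma_b (R : realType) m (b y : 'cV[R]_m) : 'cV[R]_m :=
  \col_i Num.max (y i 0 - b i 0) 0.

Fixpoint net_eval (R : realType) n (N : relu_net R n) : 'cV[R]_n -> R :=
  match N in relu_net _ n return 'cV[R]_n -> R with
  | RNout _ A => fun x => (A *m x) 0 0
  | RNlayer _ m A b N' => fun x => net_eval N' (sigma_b b (A *m x))
  end.

Fixpoint net_depth (R : Type) n (N : relu_net R n) : nat :=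
  match N with
  | RNout _ _ => 0%N
  | RNlayer _ _ _ _ N' => (net_depth N').+1
  end.

Fixpoint net_width (R : Type) n (N : relu_net R n) : nat :=
  match N with
  | RNout _ _ => 0%N
  | RNlayer _ m _ _ N' => maxn m (net_width N')
  end.

Definition pt2 (R : realType) (s t : R) : 'cV[R]_2 :=
  \col_(i < 2) (if i == ord0 then s else t).

Definition fourier_psi (R : realType) (j : nat) (t : R) : R :=
  if j == 1%N then 1
  else if odd j then Num.sqrt 2 * sin (2 * pi * (j./2)%:R * t)
  else Num.sqrt 2 * cos (2 * pi * (j./2)%:R * t).

Definition Lambda (R : realType) (j k : nat) : R := ln ((2 * maxn j k)%:R).

From HB Require Import structures.
From mathcomp Require Import all_boot all_order all_algebra.
From mathcomp Require Import all_classical all_reals.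
From mathcomp Require Import exp trigo.
From mathcomp Require Import topology normedtype derive realfun.
From mathcomp Require Import ring lra zify.
Set Implicit Arguments. Unset Strict Implicit. Unset Printing Implicit Defensive.
Import Order.TTheory GRing.Theory Num.Theory.
Import numFieldNormedType.Exports.
Local Open Scope ring_scope.

(* Write P z = sin z ^ 2. Product-to-sum gives
     psi_j s * psi_k t = gamma * (2 - 2 P (pi u1) - 2 P (pi u2))
   with 0 <= gamma <= 1 and u1, u2 affine in (s, t), so it suffices to
   approximate P (pi u) uniformly. Shifting u by an integer and dividing by
   2^(r+1) >= 2 (j v k) + 2 gives v in [0, 1] with P (pi u) = P (pi v 2^(r+1))
   = P (pi y), where y = g^(r+1) v for the tent map g. As P (2 z) = F (P z) for
   the logistic map F x = 4 x (1 - x), P (pi y) = F^m (P theta) with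
   theta = pi y / 2^m, and P theta = theta^2 + O(4^-2m). Yarotsky's expansion
   x - x^2 = sum_i g^i x / 4^i computes both theta^2 and F to accuracy 4^-2m
   with 2m tent maps, and F is 4-Lipschitz on [0, 1], so after m steps the
   error is O(4^-m). All of this runs in a width-7 ReLU network carrying two
   (value, accumulator) registers, of depth log2 (j v k) + O(m^2); m of order
   log2 (1/eps) gives the bounds. *)

Section trig_bounds.
Context {R : realType}.

Lemma ge0_derive_le_at0 (f df : R -> R) :
  (forall y, is_derive y (1 : R) f (df y)) -> (forall y, 0 <= y -> 0 <= df y) ->
  forall x, 0 <= x -> f 0 <= f x.
Proof.
move=> f'_df df_ge0 x x_ge0.
have f_der y : derivable f y 1 := @ex_derive _ _ _ _ _ _ _ (f'_df y).
apply: (ger0_derive1_ndecry (a := 0) _ _ _ (lexx 0) x_ge0) => //.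
- move=> y; rewrite in_itv /= andbT => /ltW y_ge0.
  by rewrite derive1E (@derive_val _ _ _ _ _ _ _ (f'_df y)); exact: df_ge0.
- apply: continuous_subspaceT => y.
  exact/differentiable_continuous/derivable1_diffP.
Qed.

Lemma sin_le_id (x : R) : 0 <= x -> sin x <= x.
Proof.
move=> x_ge0.
have der y : is_derive y (1 : R) (fun z => z - sin z) (1 - cos y).
  exact: is_deriveB.
have der_ge0 (y : R) : 0 <= y -> 0 <= 1 - cos y by rewrite subr_ge0 cos_le1.
have := ge0_derive_le_at0 der der_ge0 x_ge0.
by rewrite sin0 subr0 subr_ge0.
Qed.

Lemma taylor2_le_cos (x : R) : 0 <= x -> 1 - x ^+ 2 / 2 <= cos x.
Proof.
move=> x_ge0.
have der y : is_derive y (1 : R) (fun z => cos z + z * z / 2) (y - sin y).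
  apply: is_derive_eq; rewrite /= scaler0 add0r.
  have scaleE (a b : R) : a *: b = a * b by [].
  by rewrite !scaleE mulr1; field.
have der_ge0 (y : R) : 0 <= y -> 0 <= y - sin y by move=> ?; rewrite subr_ge0 sin_le_id.
have := ge0_derive_le_at0 der der_ge0 x_ge0.
rewrite cos0 !mul0r addr0 -expr2; lra.
Qed.

Lemma taylor3_le_sin (x : R) : 0 <= x -> x - x ^+ 3 / 6 <= sin x.
Proof.
move=> x_ge0.
have der y : is_derive y (1 : R) (fun z => sin z - z + z * z * z / 6)
    (cos y - (1 - y ^+ 2 / 2)).
  apply: is_derive_eq; rewrite /= scaler0 add0r.
  have scaleE (a b : R) : a *: b = a * b by [].
  by rewrite !scaleE mulr1; field.
have der_ge0 (y : R) : 0 <= y -> 0 <= cos y - (1 - y ^+ 2 / 2).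
  by move=> ?; rewrite subr_ge0 taylor2_le_cos.
have := ge0_derive_le_at0 der der_ge0 x_ge0.
have -> : x * x * x = x ^+ 3 by rewrite !exprS expr0 mulr1 mulrA.
rewrite sin0 !mul0r subr0 addr0; lra.
Qed.

End trig_bounds.

Section sawtooth.
Context {R : realType}.
Implicit Types x y D d : R.

Definition relu x : R := Num.max x 0.

Lemma relu_id x : 0 <= x -> relu x = x.
Proof. by move=> x_ge0; apply/max_idPl. Qed.

Lemma relu_eq0 x : x <= 0 -> relu x = 0.
Proof. by move=> x_le0; apply/max_idPr. Qed.

Definition tent x : R := 2 * relu x - 4 * relu (x - 1 / 2).

Lemma tent_le_half x : 0 <= x <= 1 / 2 -> tent x = 2 * x.
Proof.
by case/andP=> x_ge0 x_le; rewrite /tent relu_id // relu_eq0 ?subr_le0 // mulr0 subr0.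
Qed.

Lemma tent_ge_half x : 1 / 2 <= x -> tent x = 2 - 2 * x.
Proof.
move=> x_ge; rewrite /tent !relu_id ?subr_ge0 //; first lra.
by apply: le_trans x_ge; lra.
Qed.

Lemma tent_itv x : 0 <= x <= 1 -> 0 <= tent x <= 1.
Proof.
case/andP=> x_ge0 x_le1; have [x_le|x_gt] := lerP x (1 / 2).
  by rewrite tent_le_half ?x_ge0 //; apply/andP; split; lra.
by rewrite tent_ge_half; [apply/andP; split; lra | lra].
Qed.

Lemma iter_tent_itv k x : 0 <= x <= 1 -> 0 <= iter k tent x <= 1.
Proof. by move=> x01; elim: k => [|k IHk] //=; apply: tent_itv. Qed.

Definition parab x : R := x - x ^+ 2.

Lemma parab_itv x : 0 <= x <= 1 -> 0 <= parab x <= 1 / 4.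
Proof.
case/andP=> x_ge0 x_le1; have := sqr_ge0 (x - 1 / 2).
by rewrite /parab !expr2 => sq_ge0; apply/andP; split; nra.
Qed.

Lemma parab_lipschitz x y : 0 <= x <= 1 -> 0 <= y <= 1 ->
  `|parab x - parab y| <= `|x - y|.
Proof.
move=> /andP[x_ge0 x_le1] /andP[y_ge0 y_le1].
have -> : parab x - parab y = (x - y) * (1 - x - y) by rewrite /parab; ring.
rewrite normrM; apply: ler_piMr => //; rewrite ler_norml; apply/andP; split; lra.
Qed.

Lemma parab_tent x : 0 <= x <= 1 -> parab x = tent x / 4 + parab (tent x) / 4.
Proof.
case/andP=> x_ge0 x_le1; rewrite /parab; have [x_le|x_gt] := lerP x (1 / 2).
  by rewrite tent_le_half ?x_ge0 //; field.
by rewrite tent_ge_half; [field | lra].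
Qed.

Definition sawtooth_sum n x : R := \sum_(i < n) iter i.+1 tent x / 4 ^+ i.+1.

Lemma sawtooth_sum_ge0 n x : 0 <= x <= 1 -> 0 <= sawtooth_sum n x.
Proof.
move=> x01; apply: sumr_ge0 => i _.
have /andP[y_ge0 _] := iter_tent_itv i.+1 x01.
by rewrite divr_ge0 ?exprn_ge0.
Qed.

Lemma parab_sawtooth_sum n x : 0 <= x <= 1 ->
  parab x = sawtooth_sum n x + parab (iter n tent x) / 4 ^+ n.
Proof.
move=> x01; elim: n => [|n IHn]; first by rewrite /sawtooth_sum big_ord0 expr0 divr1 add0r.
rewrite IHn /sawtooth_sum big_ord_recr /= (parab_tent (iter_tent_itv n x01)) exprS.
have pow4_neq0 : (4 : R) ^+ n != 0 by rewrite expf_neq0 // pnatr_eq0.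
by field.
Qed.

Lemma parab_sawtooth_err n x : 0 <= x <= 1 ->
  0 <= parab x - sawtooth_sum n x <= 1 / 4 ^+ n.+1.
Proof.
move=> x01; rewrite (parab_sawtooth_sum n x01) addrC addKr.
have /andP[q_ge0 q_le] := parab_itv (iter_tent_itv n x01).
rewrite divr_ge0 ?exprn_ge0 //=.
have pow4_neq0 : (4 : R) ^+ n != 0 by rewrite expf_neq0 // pnatr_eq0.
have -> : 1 / (4 : R) ^+ n.+1 = (1 / 4) / 4 ^+ n by rewrite exprS; field.
by rewrite ler_pM2r ?invr_gt0 ?exprn_gt0.
Qed.

Definition logistic x : R := 4 * parab x.

Definition logistic_approx n x : R := 4 * sawtooth_sum n x.

Lemma logistic_itv x : 0 <= x <= 1 -> 0 <= logistic x <= 1.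
Proof. by move=> /parab_itv /andP[? ?]; apply/andP; rewrite /logistic; split; lra. Qed.

Lemma logistic_approx_itv n x : 0 <= x <= 1 -> 0 <= logistic_approx n x <= 1.
Proof.
move=> x01; have /andP[_ q_le] := parab_itv x01.
have /andP[err_ge0 _] := parab_sawtooth_err n x01.
have := sawtooth_sum_ge0 n x01; rewrite /logistic_approx => ?; apply/andP; split; lra.
Qed.

Lemma iter_logistic_itv i x : 0 <= x <= 1 -> 0 <= iter i logistic x <= 1.
Proof. by move=> x01; elim: i => [|i IHi] //=; apply: logistic_itv. Qed.

Lemma iter_logistic_approx_itv n i x : 0 <= x <= 1 ->
  0 <= iter i (logistic_approx n) x <= 1.
Proof. by move=> x01; elim: i => [|i IHi] //=; apply: logistic_approx_itv. Qed.

Lemma logistic_approx_err n D d : 0 <= D <= 1 -> 0 <= d <= 1 ->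
  `|logistic D - logistic_approx n d| <= 4 * `|D - d| + 1 / 4 ^+ n.
Proof.
move=> D01 d01; have /andP[err_ge0 err_le] := parab_sawtooth_err n d01.
have -> : logistic D - logistic_approx n d =
    4 * (parab D - parab d) + 4 * (parab d - sawtooth_sum n d).
  by rewrite /logistic /logistic_approx; ring.
apply: (le_trans (ler_normD _ _)); apply: lerD.
  by rewrite normrM ger0_norm // ler_pM2l // parab_lipschitz.
rewrite normrM !ger0_norm //.
have pow4_neq0 : (4 : R) ^+ n != 0 by rewrite expf_neq0 // pnatr_eq0.
have -> : 1 / (4 : R) ^+ n = 4 * (1 / 4 ^+ n.+1) by rewrite exprS; field.
by rewrite ler_pM2l.
Qed.

(* Each exact step multiplies the error by at most 4, each approximate one adds 1/4^n. *)
Lemma iter_logistic_approx_err n i D d : 0 <= D <= 1 -> 0 <= d <= 1 ->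
  `|iter i logistic D - iter i (logistic_approx n) d| + 1 / 4 ^+ n <=
  4 ^+ i * (`|D - d| + 1 / 4 ^+ n).
Proof.
move=> D01 d01; elim: i => [|i IHi]; first by rewrite expr0 mul1r /=; lra.
have := logistic_approx_err n (iter_logistic_itv i D01) (iter_logistic_approx_itv n i d01).
have : 0 <= 1 / (4 : R) ^+ n by rewrite divr_ge0 ?exprn_ge0.
rewrite !iterS exprS -mulrA; lra.
Qed.

End sawtooth.

Section sin_square.
Context {R : realType}.
Implicit Types x z : R.

Definition sinsq z : R := sin z ^+ 2.

Lemma sinsq_itv z : 0 <= sinsq z <= 1.
Proof. by rewrite /sinsq sqr_ge0 /= -(cos2Dsin2 z) lerDr sqr_ge0. Qed.

Lemma cos_mulr2n_sinsq z : cos (z *+ 2) = 1 - 2 * sinsq z.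
Proof. by rewrite cos_mulr2n cos2sin2 /sinsq mulr2n; ring. Qed.

Lemma sinsq_mulr2n z : sinsq (z *+ 2) = logistic (sinsq z).
Proof.
rewrite /sinsq /logistic /parab sin_mulr2n.
transitivity (4 * cos z ^+ 2 * sin z ^+ 2); first by rewrite mulr2n; ring.
by rewrite cos2sin2; ring.
Qed.

Lemma sinsq_mul2X i z : sinsq (z * 2 ^+ i) = iter i logistic (sinsq z).
Proof.
elim: i => [|i IHi]; first by rewrite expr0 mulr1.
by rewrite iterS -IHi -sinsq_mulr2n exprS mulr2n; congr sinsq; ring.
Qed.

Lemma sinsqDpi z n : sinsq (z + pi *+ n) = sinsq z.
Proof. by rewrite /sinsq (alternatingn (@sinDpi R)) exprMn sqrr_sign mul1r. Qed.

Lemma sinsq_tent x : 0 <= x <= 1 -> sinsq (pi * tent x) = sinsq ((pi * x) *+ 2).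
Proof.
case/andP=> x_ge0 x_le1; have [x_le|x_gt] := lerP x (1 / 2).
  by rewrite tent_le_half ?x_ge0 // mulr2n; congr sinsq; ring.
rewrite tent_ge_half; last lra.
have -> : pi * (2 - 2 * x) = pi *+ 2 - (pi * x) *+ 2 by rewrite !mulr2n; ring.
by rewrite /sinsq sinB sin2pi cos2pi mul0r mul1r sub0r sqrrN.
Qed.

Lemma sinsq_iter_tent k x : 0 <= x <= 1 ->
  sinsq (pi * iter k tent x) = sinsq (pi * x * 2 ^+ k).
Proof.
move=> x01; elim: k => [|k IHk]; first by rewrite expr0 mulr1.
rewrite iterS sinsq_tent ?iter_tent_itv // sinsq_mulr2n IHk -sinsq_mulr2n exprS.
by congr sinsq; rewrite mulr2n; ring.
Qed.

Lemma sinsq_sqr_err x : 0 <= x <= 1 -> `|sinsq x - x ^+ 2| <= x ^+ 4 / 3.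
Proof.
case/andP=> x_ge0 x_le1.
have sin_le := sin_le_id x_ge0; have sin_ge := taylor3_le_sin x_ge0.
have taylor_ge0 : 0 <= x - x ^+ 3 / 6 by rewrite !exprS expr0; nra.
have sinsq_le : sinsq x <= x ^+ 2 by rewrite /sinsq !expr2 ler_pM //; lra.
have sinsq_ge : (x - x ^+ 3 / 6) ^+ 2 <= sinsq x by rewrite /sinsq !expr2 ler_pM.
have x6_ge0 : 0 <= x ^+ 6 / 36 by rewrite divr_ge0 ?exprn_ge0.
have : x ^+ 2 - x ^+ 4 / 3 <= (x - x ^+ 3 / 6) ^+ 2.
  by rewrite !exprS expr0 in x6_ge0 *; nra.
have : 0 <= x ^+ 4 / 3 by rewrite divr_ge0 ?exprn_ge0.
rewrite ler_norml; move=> *; apply/andP; split; lra.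
Qed.

End sin_square.

(* A neuron (c, b) has sparse weights c : seq (index, weight) and computes
   relu (lin_form c x - b); layer outputs x : nat -> R vanish beyond the width. *)
Definition neuron (R : Type) := (seq (nat * R) * R)%type.

Section layered_nets.
Context {R : realType}.

Definition lin_form (c : seq (nat * R)) (x : nat -> R) : R := \sum_(p <- c) p.2 * x p.1.

Definition nth_neuron (L : seq (neuron R)) i := nth ([::], 0) L i.

Definition layer_eval (L : seq (neuron R)) (x : nat -> R) : nat -> R := fun i =>
  if (i < size L)%N then relu (lin_form (nth_neuron L i).1 x - (nth_neuron L i).2) else 0.

Definition layers_eval (Ls : seq (seq (neuron R))) (out : seq (nat * R)) x : R :=
  lin_form out (foldl (fun y L => layer_eval L y) x Ls).

Definition col_fun n (x : 'cV[R]_n) : nat -> R :=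
  fun k => oapp (fun i : 'I_n => x i 0) 0 (insub k).

Definition sparse_row n (c : seq (nat * R)) : 'rV[R]_n :=
  \row_j \sum_(p <- c | p.1 == j :> nat) p.2.

Definition layer_mx n (L : seq (neuron R)) : 'M[R]_(size L, n) :=
  \matrix_(i, j) sparse_row n (nth_neuron L i).1 0 j.

Definition layer_bias (L : seq (neuron R)) : 'cV[R]_(size L) :=
  \col_i (nth_neuron L i).2.

Fixpoint net_of_layers n (Ls : seq (seq (neuron R))) out : relu_net R n :=
  match Ls with
  | [::] => RNout (sparse_row n out)
  | L :: Ls' => RNlayer (layer_mx n L) (layer_bias L) (net_of_layers (size L) Ls' out)
  end.

Lemma sparse_row_mulmx n c (x : 'cV[R]_n) :
  (sparse_row n c *m x) 0 0 = lin_form c (col_fun x).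
Proof.
rewrite mxE; under eq_bigr do rewrite mxE.
elim: c => [|q c IHc].
  by rewrite /lin_form big_nil; apply: big1 => j _; rewrite big_nil mul0r.
rewrite /lin_form big_cons -/(lin_form c _) -IHc.
rewrite (eq_bigr (fun j : 'I_n => (q.1 == j :> nat)%:R * q.2 * x j 0
                    + (\sum_(p <- c | p.1 == j :> nat) p.2) * x j 0)); last first.
  by move=> j _; rewrite big_cons; case: eqP => _; rewrite ?mul1r ?mul0r ?add0r // mulrDl.
rewrite big_split /=; congr (_ + _).
rewrite /col_fun; case: insubP => [i _ q1E|q1_ge] /=.
  rewrite (bigD1 i) //= -q1E eqxx mul1r big1 ?addr0 // => j ji.
  by rewrite (inj_eq val_inj) eq_sym (negbTE ji) mul0r mul0r.
rewrite mulr0; apply: big1 => j _; case: eqP => [q1E|_]; last by rewrite !mul0r.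
by move: q1_ge; rewrite q1E ltn_ord.
Qed.

Lemma net_of_layers_eval n Ls out (x : 'cV[R]_n) :
  net_eval (net_of_layers n Ls out) x = layers_eval Ls out (col_fun x).
Proof.
elim: Ls n x => [|L Ls IHLs] n x /=; first exact: sparse_row_mulmx.
rewrite IHLs /layers_eval /=; congr (lin_form _ (foldl _ _ _)).
apply: boolp.funext => k; rewrite /col_fun /layer_eval.
case: insubP => [i _ <-|k_ge] /=; last by rewrite (negbTE k_ge).
rewrite ltn_ord /sigma_b mxE -sparse_row_mulmx /relu !mxE.
by congr (Num.max (_ - _) 0); apply: eq_bigr => j _; rewrite !mxE.
Qed.

Lemma net_of_layers_depth n Ls out : net_depth (net_of_layers n Ls out) = size Ls.
Proof. by elim: Ls n => [|L Ls IHLs] n //=; rewrite IHLs. Qed.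

Lemma net_of_layers_width n Ls out :
  net_width (net_of_layers n Ls out) = \max_(L <- Ls) size L.
Proof. by elim: Ls n => [|L Ls IHLs] n; rewrite ?big_nil ?big_cons //= IHLs. Qed.

End layered_nets.

Inductive instr (R : Type) := Tent | Seed of R | Accum of R | Flush of R.
Arguments Tent {R}.

Section register_machine.
Context {R : realType}.
Implicit Types (I : instr R) (P : seq (instr R)) (p q : R * R).

(* A register is a pair (value, accumulator). The accumulator is read
   through a ReLU, which is harmless as long as it stays nonnegative. *)
Definition exec I p : R * R :=
  let g := tent p.1 in let a := relu p.2 in
  match I with
  | Tent => (g, 0)
  | Seed k => (k * g, k * g)
  | Accum w => (g, a + w * g)
  | Flush w => (a + w * g, 0)
  end.

Definition run P p : R * R := foldl (fun q I => exec I q) p P.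

Lemma run_cat P P' p : run (P ++ P') p = run P' (run P p).
Proof. by rewrite /run foldl_cat. Qed.

(* Hidden layers have 7 neurons: the constant 1, then relu v, relu (v - 1/2)
   and relu a for each of the two registers (v, a). *)
Definition regs p q : nat -> R := fun i =>
  match i with
  | 0%N => 1 | 1%N => relu p.1 | 2%N => relu (p.1 - 1 / 2) | 3%N => relu p.2
  | 4%N => relu q.1 | 5%N => relu (q.1 - 1 / 2) | 6%N => relu q.2 | _ => 0
  end.

Definition scale_form (w : R) (c : seq (nat * R)) := [seq (e.1, w * e.2) | e <- c].

Definition tent_form o : seq (nat * R) := [:: (o, 2); (o.+1, -4)].

Definition value_form I o : seq (nat * R) :=
  match I with
  | Tent | Accum _ => tent_form o
  | Seed k => scale_form k (tent_form o)
  | Flush w => (o.+2, 1) :: scale_form w (tent_form o)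
  end.

Definition accum_form I o : seq (nat * R) :=
  match I with
  | Tent | Flush _ => [::]
  | Seed k => scale_form k (tent_form o)
  | Accum w => (o.+2, 1) :: scale_form w (tent_form o)
  end.

Definition register_neurons (V A : seq (nat * R)) : seq (neuron R) :=
  [:: (V, 0); (V, 1 / 2); (A, 0)].

Definition instr_layer I : seq (neuron R) :=
  ([::], -1) :: register_neurons (value_form I 1) (accum_form I 1)
             ++ register_neurons (value_form I 4) (accum_form I 4).

Lemma lin_form_instr I p q :
  [/\ lin_form (value_form I 1) (regs p q) = (exec I p).1,
      lin_form (accum_form I 1) (regs p q) = (exec I p).2,
      lin_form (value_form I 4) (regs p q) = (exec I q).1 &
      lin_form (accum_form I 4) (regs p q) = (exec I q).2].
Proof.
by case: I => *; split; rewrite /lin_form /= ?big_map ?big_cons ?big_nil /= /tent; ring.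
Qed.

Lemma const_neuron_eval (x : nat -> R) : relu (lin_form [::] x - -1) = 1.
Proof. by rewrite /lin_form big_nil sub0r opprK relu_id. Qed.

Lemma instr_layer_eval I p q :
  layer_eval (instr_layer I) (regs p q) = regs (exec I p) (exec I q).
Proof.
have [v1E a1E v2E a2E] := lin_form_instr I p q.
apply: boolp.funext => i; rewrite /layer_eval /nth_neuron.
by case: i => [|[|[|[|[|[|[|i]]]]]]];
  rewrite /= ?const_neuron_eval ?v1E ?a1E ?v2E ?a2E ?subr0.
Qed.

Lemma run_layers P p q :
  foldl (fun y L => layer_eval L y) (regs p q) (map instr_layer P) =
  regs (run P p) (run P q).
Proof. by elim: P p q => [|I P IHP] p q //=; rewrite instr_layer_eval IHP. Qed.

Definition input_layer (a1 b1 c1 a2 b2 c2 : R) : seq (neuron R) :=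
  let e1 := [:: (0%N, a1); (1%N, b1)] in let e2 := [:: (0%N, a2); (1%N, b2)] in
  [:: ([::], -1); (e1, - c1); (e1, 1 / 2 - c1); ([::], 0);
                  (e2, - c2); (e2, 1 / 2 - c2); ([::], 0)].

Lemma col_fun_pt2 (s t : R) : col_fun (pt2 s t) 0 = s /\ col_fun (pt2 s t) 1 = t.
Proof.
rewrite /col_fun /pt2; split; case: insubP => [i _ iE|] //=; rewrite mxE.
  by have -> : i = ord0 by apply: val_inj.
by have -> : i = ord_max by apply: val_inj.
Qed.

Lemma input_layer_eval (a1 b1 c1 a2 b2 c2 s t : R) :
  layer_eval (input_layer a1 b1 c1 a2 b2 c2) (col_fun (pt2 s t)) =
  regs (a1 * s + b1 * t + c1, 0) (a2 * s + b2 * t + c2, 0).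
Proof.
have [sE tE] := col_fun_pt2 s t.
apply: boolp.funext => i; rewrite /layer_eval /nth_neuron.
case: i => [|[|[|[|[|[|[|i]]]]]]];
  rewrite /= ?const_neuron_eval /lin_form ?big_cons ?big_nil /= ?sE ?tE //.
all: by congr relu; ring.
Qed.

Definition output_form (gam : R) : seq (nat * R) :=
  [:: (0%N, 2 * gam); (1%N, - (2 * gam)); (4%N, - (2 * gam))].

Definition register_net (a1 b1 c1 a2 b2 c2 gam : R) P : relu_net R 2 :=
  net_of_layers 2 (input_layer a1 b1 c1 a2 b2 c2 :: map instr_layer P) (output_form gam).

Lemma register_net_eval (a1 b1 c1 a2 b2 c2 gam : R) P s t :
  net_eval (register_net a1 b1 c1 a2 b2 c2 gam P) (pt2 s t) =
  2 * gam * (1 - relu (run P (a1 * s + b1 * t + c1, 0)).1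
                - relu (run P (a2 * s + b2 * t + c2, 0)).1).
Proof.
rewrite net_of_layers_eval /layers_eval /= input_layer_eval run_layers.
by rewrite /lin_form !big_cons big_nil /=; ring.
Qed.

Lemma register_net_depth (a1 b1 c1 a2 b2 c2 gam : R) P :
  net_depth (register_net a1 b1 c1 a2 b2 c2 gam P) = (size P).+1.
Proof. by rewrite net_of_layers_depth /= size_map. Qed.

Lemma register_net_width (a1 b1 c1 a2 b2 c2 gam : R) P :
  (net_width (register_net a1 b1 c1 a2 b2 c2 gam P) <= 7)%N.
Proof.
rewrite net_of_layers_width big_cons geq_max /=.
by elim: P => [|I P IHP]; rewrite /= ?big_nil ?big_cons // geq_max IHP.
Qed.

End register_machine.

Section sinsq_program.
Context {R : realType}.

Definition sawtooth_block (sg : R) n : seq (instr R) :=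
  [seq Accum (sg / 4 ^+ i.+1) | i <- iota 0 n.-1] ++ [:: Flush (sg / 4 ^+ n)].

Lemma size_sawtooth_block sg n : (0 < n)%N -> size (sawtooth_block sg n) = n.
Proof. by case: n => // n _; rewrite size_cat size_map size_iota addn1. Qed.

Lemma run_accums sg (v a : R) k : 0 <= v <= 1 ->
  (forall i, (i < k)%N -> 0 <= a + sg * sawtooth_sum i v) ->
  run [seq Accum (sg / 4 ^+ i.+1) | i <- iota 0 k] (v, a) =
  (iter k tent v, a + sg * sawtooth_sum k v).
Proof.
move=> v01; elim: k => [|k IHk] acc_ge0.
  by rewrite /sawtooth_sum big_ord0 mulr0 addr0.
have -> : iota 0 k.+1 = iota 0 k ++ [:: k] by rewrite -addn1 iotaD.
rewrite map_cat run_cat IHk => [|i ik]; last by apply: acc_ge0; lia.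
rewrite /= relu_id ?acc_ge0 // /sawtooth_sum big_ord_recr /=.
by congr (_, _); ring.
Qed.

Lemma run_sawtooth_block sg (v a : R) n : (0 < n)%N -> 0 <= v <= 1 ->
  (forall i, (i < n)%N -> 0 <= a + sg * sawtooth_sum i v) ->
  run (sawtooth_block sg n) (v, a) = (a + sg * sawtooth_sum n v, 0).
Proof.
case: n => // n _ v01 acc_ge0.
rewrite run_cat run_accums // => [|i ni]; last by apply: acc_ge0; lia.
rewrite /= relu_id ?acc_ge0 // /sawtooth_sum big_ord_recr /=.
by congr (_, _); ring.
Qed.

Lemma run_logistic_blocks m n (d : R) : (0 < n)%N -> 0 <= d <= 1 ->
  run (flatten (nseq m (sawtooth_block 4 n))) (d, 0) = (iter m (logistic_approx n) d, 0).
Proof.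
move=> n_gt0; elim: m d => [|m IHm] d d01 //=.
rewrite run_cat run_sawtooth_block // => [|i _]; last first.
  by rewrite add0r mulr_ge0 // sawtooth_sum_ge0.
rewrite add0r IHm; last exact: logistic_approx_itv.
by rewrite -[RHS]/(iter m.+1 _ d, 0) iterSr.
Qed.

Lemma run_tents r (v : R) : run (nseq r Tent) (v, 0) = (iter r tent v, 0).
Proof. by elim: r v => [|r IHr] v //=; rewrite IHr -iterSr. Qed.

(* r + 1 tent maps, then theta = pi / 2^m * y, then the sawtooth
   approximation of theta^2, then m approximate logistic steps. *)
Definition sinsq_program r m : seq (instr R) :=
  nseq r Tent ++ Seed (pi / 2 ^+ m) :: sawtooth_block (-1) (2 * m)
    ++ flatten (nseq m (sawtooth_block 4 (2 * m))).

Lemma size_sinsq_program r m : (0 < m)%N ->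
  size (sinsq_program r m) = (r + 1 + 2 * m + m * (2 * m))%N.
Proof.
move=> m_gt0; have n_gt0 : (0 < 2 * m)%N by rewrite muln_gt0.
rewrite /sinsq_program size_cat /= size_cat size_nseq size_sawtooth_block //.
rewrite size_flatten /shape map_nseq size_sawtooth_block // sumn_nseq; lia.
Qed.

Lemma pi_le4 : pi <= 4 :> R.
Proof. by have := @pihalf_lt2 R; lra. Qed.

Lemma pi_div_pow2_itv m : (3 <= m)%N -> 0 <= (pi : R) / 2 ^+ m <= 1 / 2.
Proof.
move=> m_ge3; have pow2_ge8 : 8 <= 2 ^+ m :> R.
  rewrite -(subnKC m_ge3) exprD (_ : 2 ^+ 3 = 8 :> R); last by rewrite !exprS expr0; lra.
  have : 1 <= 2 ^+ (m - 3) :> R by apply: exprn_ege1; lra.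
  nra.
rewrite divr_ge0 ?pi_ge0 ?exprn_ge0 //= ler_pdivrMr; last lra.
by have := @pi_le4; lra.
Qed.

Lemma sqr_approx_err n (x : R) : 0 <= x <= 1 ->
  0 <= (x - sawtooth_sum n x) - x ^+ 2 <= 1 / 4 ^+ n.+1.
Proof.
move=> x01; have := parab_sawtooth_err n x01.
by rewrite /parab addrAC.
Qed.

Lemma sqr_approx_itv n (x : R) : 0 <= x <= 1 -> 0 <= x - sawtooth_sum n x <= 1.
Proof.
move=> x01; have /andP[? _] := sqr_approx_err n x01.
have := sawtooth_sum_ge0 n x01; case/andP: x01 => *; apply/andP; split; nra.
Qed.

Lemma run_sinsq_program r m (v : R) : (3 <= m)%N -> 0 <= v <= 1 ->
  let theta := pi / 2 ^+ m * iter r.+1 tent v in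
  (run (sinsq_program r m) (v, 0)).1 =
  iter m (logistic_approx (2 * m)) (theta - sawtooth_sum (2 * m) theta).
Proof.
move=> m_ge3 v01 theta.
have /andP[y_ge0 y_le1] := iter_tent_itv r.+1 v01.
have /andP[k_ge0 k_le] := pi_div_pow2_itv m_ge3.
have theta01 : 0 <= theta <= 1 by rewrite /theta; apply/andP; split; nra.
have n_gt0 : (0 < 2 * m)%N by lia.
rewrite /sinsq_program run_cat run_tents /= -iterS -/theta.
rewrite run_cat run_sawtooth_block // => [|i _]; last first.
  by rewrite mulN1r; case/andP: (sqr_approx_itv i theta01).
by rewrite mulN1r run_logistic_blocks // sqr_approx_itv.
Qed.

Lemma err_budget m (x e : R) : x * 4 ^+ (2 * m) <= 256 ->
  e + 1 / 4 ^+ (2 * m) <= 4 ^+ m * (x / 3 + 1 / 4 ^+ (2 * m).+1 + 1 / 4 ^+ (2 * m)) ->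
  e <= 88 / 4 ^+ m.
Proof.
rewrite exprS mulnC exprM; set Q : R := 4 ^+ m => xQ_le.
have Q_gt0 : 0 < Q by rewrite exprn_gt0.
have -> : Q * (x / 3 + 1 / (4 * Q ^+ 2) + 1 / Q ^+ 2) = (x * Q ^+ 2 / 3 + 5 / 4) / Q.
  by field; rewrite gt_eqF.
have : (x * Q ^+ 2 / 3 + 5 / 4) / Q <= 88 / Q by rewrite ler_pM2r ?invr_gt0 //; lra.
have : 0 <= 1 / Q ^+ 2 by rewrite divr_ge0 ?exprn_ge0 // ltW.
lra.
Qed.

Lemma sinsq_program_err r m (v : R) : (3 <= m)%N -> 0 <= v <= 1 ->
  let d := (run (sinsq_program r m) (v, 0)).1 in
  0 <= d /\ `|d - sinsq (pi * v * 2 ^+ r.+1)| <= 88 / 4 ^+ m.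
Proof.
move=> m_ge3 v01 d; rewrite {}/d run_sinsq_program //.
set theta := pi / 2 ^+ m * iter r.+1 tent v.
have /andP[y_ge0 y_le1] := iter_tent_itv r.+1 v01.
have /andP[k_ge0 k_le] := pi_div_pow2_itv m_ge3.
have theta01 : 0 <= theta <= 1 by rewrite /theta; apply/andP; split; nra.
have d01 := sqr_approx_itv (2 * m) theta01.
split; first by case/andP: (iter_logistic_approx_itv (2 * m) m d01).
have -> : sinsq (pi * v * 2 ^+ r.+1) = iter m logistic (sinsq theta).
  rewrite -sinsq_mul2X -sinsq_iter_tent // /theta; congr sinsq.
  by field; rewrite expf_neq0 // pnatr_eq0.
rewrite distrC; apply: (err_budget (x := theta ^+ 4)).
  have theta_le : theta * 2 ^+ m <= 4.
    by rewrite /theta mulrAC divfK ?expf_neq0 ?pnatr_eq0 //; have := pi_le4; nra.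
  have theta_ge0 : 0 <= theta * 2 ^+ m.
    by case/andP: theta01 => *; rewrite mulr_ge0 ?exprn_ge0.
  have -> : theta ^+ 4 * 4 ^+ (2 * m) = (theta * 2 ^+ m) ^+ 4.
    have four : 4 = 2 ^+ 2 :> R by rewrite expr2; lra.
    by rewrite [RHS]exprMn four -!exprM; congr (_ * 2 ^+ _); lia.
  rewrite (_ : 256 = 4 ^+ 4 :> R); last by rewrite !exprS expr0; lra.
  by rewrite lerXn2r ?nnegrE.
apply: (le_trans (iter_logistic_approx_err (2 * m) m (sinsq_itv theta) d01)).
rewrite ler_wpM2l ?exprn_ge0 // lerD2r.
have /andP[? ?] := sqr_approx_err (2 * m) theta01.
have := sinsq_sqr_err theta01.
set D := theta - _.
have -> : sinsq theta - D = (sinsq theta - theta ^+ 2) - (D - theta ^+ 2) by ring.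
move=> sq_err; apply: (le_trans (ler_normB _ _)); rewrite [`|D - _|]ger0_norm // /D; lra.
Qed.

End sinsq_program.

Section fourier_product.
Context {R : realType}.

Definition fourier_amp j : R := if j == 1%N then 1 else Num.sqrt 2.

Definition fourier_phase j : R := if (j != 1%N) && odd j then 1 / 4 else 0.

Lemma fourier_psi_cos j (s : R) :
  fourier_psi j s = fourier_amp j * cos (2 * pi * ((j./2)%:R * s - fourier_phase j)).
Proof.
rewrite /fourier_psi /fourier_amp /fourier_phase; case: eqP => [->|_] /=.
  by rewrite (_ : 2 * pi * _ = 0) ?cos0 ?mulr1 //; ring.
case: ifP => _; last by rewrite subr0 mulrA.
by rewrite -cosBpihalf; congr (_ * cos _); field.
Qed.

Lemma fourier_amp_itv j k : 0 <= (fourier_amp j * fourier_amp k / 2 : R) <= 1.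
Proof.
have sqrt2_ge0 : 0 <= Num.sqrt (2 : R) by rewrite sqrtr_ge0.
have sqrt2_sq : Num.sqrt (2 : R) * Num.sqrt 2 = 2 by rewrite -expr2 sqr_sqrtr.
by rewrite /fourier_amp; case: ifP => _; case: ifP => _; apply/andP; split; nra.
Qed.

(* Product-to-sum, then cos (2 z) = 1 - 2 sin^2 z. *)
Lemma fourier_psi_mul j k (s t : R) :
  let a : R := (j./2)%:R in let b : R := (k./2)%:R in
  let phj := fourier_phase j in let phk := fourier_phase k in
  fourier_psi j s * fourier_psi k t =
  fourier_amp j * fourier_amp k / 2 *
  (2 - 2 * sinsq (pi * (a * s + b * t - phj - phk))
      - 2 * sinsq (pi * (a * s - b * t - phj + phk))).
Proof.
move=> a b phj phk; rewrite !fourier_psi_cos -/a -/b -/phj -/phk mulrACA.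
set x := 2 * pi * (a * s - phj); set y := 2 * pi * (b * t - phk).
have -> : cos x * cos y = (cos (x + y) + cos (x - y)) / 2 by rewrite cosD cosB; field.
have -> : x + y = (pi * (a * s + b * t - phj - phk)) *+ 2 by rewrite mulr2n /x /y; ring.
have -> : x - y = (pi * (a * s - b * t - phj + phk)) *+ 2 by rewrite mulr2n /x /y; ring.
by rewrite !cos_mulr2n_sinsq; field.
Qed.

End fourier_product.

Section fourier_net.
Context {R : realType}.

Lemma sinsq_channel r m (u : R) c : (3 <= m)%N -> 0 <= u + c%:R <= 2 ^+ r.+1 ->
  let d := (run (sinsq_program r m) ((u + c%:R) / 2 ^+ r.+1, 0)).1 in
  0 <= d /\ `|d - sinsq (pi * u)| <= 88 / 4 ^+ m.
Proof.
move=> m_ge3 /andP[uc_ge0 uc_le] d.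
have D_gt0 : 0 < 2 ^+ r.+1 :> R by rewrite exprn_gt0.
have v01 : 0 <= (u + c%:R) / 2 ^+ r.+1 <= 1.
  by rewrite divr_ge0 ?(ltW D_gt0) //= ler_pdivrMr // mul1r.
have [d_ge0 d_err] := sinsq_program_err r m_ge3 v01.
have argE : pi * ((u + c%:R) / 2 ^+ r.+1) * 2 ^+ r.+1 = pi * u + pi *+ c.
  by rewrite -mulrA divfK ?gt_eqF // mulrDr mulr_natr.
by rewrite argE sinsqDpi in d_err.
Qed.

Lemma two_channel_err (g P1 P2 d1 d2 e : R) : 0 <= g <= 1 ->
  `|d1 - P1| <= e -> `|d2 - P2| <= e ->
  `|g * (2 - 2 * P1 - 2 * P2) - 2 * g * (1 - d1 - d2)| <= 4 * e.
Proof.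
move=> /andP[g_ge0 g_le1] err1 err2.
have -> : g * (2 - 2 * P1 - 2 * P2) - 2 * g * (1 - d1 - d2) =
    2 * g * ((d1 - P1) + (d2 - P2)) by ring.
rewrite normrM ger0_norm ?mulr_ge0 //.
have := ler_normD (d1 - P1) (d2 - P2); have := normr_ge0 (d1 - P1 + (d2 - P2)).
nra.
Qed.

Lemma half_add_double_half_le j k :
  (j./2 + 2 * k./2 + 2 <= 2 ^ (trunc_log 2 (maxn j k)).+2)%N.
Proof.
rewrite expnS; move: (@trunc_log_ltn 2 (maxn j k) isT) (leq_maxl j k) (leq_maxr j k).
move: (odd_double_half j) (odd_double_half k); rewrite -!addnn.
move: (2 ^ (trunc_log 2 (maxn j k)).+1)%N (maxn j k) => z M; lia.
Qed.

Lemma phase_args_itv (a b s t phj phk D : R) :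
  0 <= a -> 0 <= b -> 0 <= s <= 1 -> 0 <= t <= 1 ->
  0 <= phj <= 1 / 4 -> 0 <= phk <= 1 / 4 -> a + 2 * b + 2 <= D ->
  0 <= a * s + b * t - phj - phk + (b + 1) <= D /\
  0 <= a * s - b * t - phj + phk + (b + 1) <= D.
Proof.
move=> a_ge0 b_ge0 /andP[? ?] /andP[? ?] /andP[? ?] /andP[? ?] ab_le.
by split; apply/andP; split; nra.
Qed.

Lemma fourier_phase_itv j : 0 <= (fourier_phase j : R) <= 1 / 4.
Proof. by rewrite /fourier_phase; case: ifP => _; apply/andP; split; lra. Qed.

Lemma fourier_product_net j k m : (3 <= m)%N ->
  exists N : relu_net R 2,
    [/\ net_depth N = (trunc_log 2 (maxn j k) + 3 + 2 * m + 2 * m ^ 2)%N,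
        (net_width N <= 7)%N &
        forall s t, 0 <= s <= 1 -> 0 <= t <= 1 ->
          `|fourier_psi j s * fourier_psi k t - net_eval N (pt2 s t)| <= 352 / 4 ^+ m].
Proof.
move=> m_ge3; set r := (trunc_log 2 (maxn j k)).+1.
set D : R := 2 ^+ r.+1; have D_gt0 : 0 < D by rewrite exprn_gt0.
set a : R := (j./2)%:R; set b : R := (k./2)%:R; set c := (k./2).+1.
set phj : R := fourier_phase j; set phk : R := fourier_phase k.
exists (register_net (a / D) (b / D) ((c%:R - phj - phk) / D)
                     (a / D) (- b / D) ((c%:R - phj + phk) / D)
                     (fourier_amp j * fourier_amp k / 2) (sinsq_program r m)).
split=> [||s t s01 t01].
- by rewrite register_net_depth size_sinsq_program /r; lia.
- exact: register_net_width.
rewrite register_net_eval fourier_psi_mul -/a -/b -/phj -/phk.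
have cE : c%:R = b + 1 :> R by rewrite -natr1.
have abD : a + 2 * b + 2 <= D.
  have := half_add_double_half_le j k; rewrite -(ler_nat R) natrD natrD natrM natrX.
  by rewrite /a /b /D /r.
have [] := phase_args_itv (ler0n _ _) (ler0n _ _) s01 t01
  (fourier_phase_itv j) (fourier_phase_itv k) abD; rewrite -cE => u1_itv u2_itv.
have [d1_ge0 err1] := sinsq_channel m_ge3 u1_itv.
have [d2_ge0 err2] := sinsq_channel m_ge3 u2_itv.
have -> : a / D * s + b / D * t + (c%:R - phj - phk) / D =
    (a * s + b * t - phj - phk + c%:R) / D by field; rewrite gt_eqF.
have -> : a / D * s + - b / D * t + (c%:R - phj + phk) / D =
    (a * s - b * t - phj + phk + c%:R) / D by field; rewrite gt_eqF.
rewrite !relu_id //; apply: le_trans (two_channel_err (fourier_amp_itv j k) err1 err2) _.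
lra.
Qed.

End fourier_net.

Section size_budget.
Context {R : realType}.
Implicit Types eps : R.

Definition doublings eps : nat := (trunc_log 2 (Num.truncn (1 / eps)) + 6)%N.

Lemma doublings_ge3 eps : (3 <= doublings eps)%N.
Proof. by rewrite /doublings; lia. Qed.

Lemma doublings_err eps : 0 < eps -> eps < 1 / 2 -> 352 / 4 ^+ doublings eps <= eps.
Proof.
move=> eps_gt0 eps_lt; set n := Num.truncn (1 / eps).
set Z : R := 2 ^+ (trunc_log 2 n).+1.
have inv_lt : 1 / eps < Z.
  apply: lt_le_trans (truncnS_gt (1 / eps)) _.
  by rewrite /Z -natrX ler_nat trunc_log_ltn.
have Z_ge1 : 1 <= Z by apply: exprn_ege1; lra.
have epsZ : 1 < eps * Z by rewrite mulrC -ltr_pdivrMr.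
have -> : 4 ^+ doublings eps = Z ^+ 2 * 4 ^+ 5 :> R.
  have four : 4 = 2 ^+ 2 :> R by rewrite expr2; lra.
  by rewrite /doublings -/n /Z four -!exprM -exprD; congr (2 ^+ _); lia.
have -> : 4 ^+ 5 = 1024 :> R by rewrite !exprS expr0; lra.
rewrite ler_pdivrMr; last by rewrite mulr_gt0 ?exprn_gt0 //; lra.
rewrite expr2; nra.
Qed.

Lemma log2_le_ln n : (0 < n)%N -> (trunc_log 2 n)%:R * ln 2 <= ln (n%:R : R).
Proof.
move=> n_gt0; rewrite mulr_natl -lnXn ?ltr0n // ler_ln ?posrE ?exprn_gt0 ?ltr0n //.
by rewrite -natrX ler_nat trunc_logP.
Qed.

Lemma ln2_le_Lambda j k : (1 <= j)%N -> ln 2 <= Lambda R j k.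
Proof.
move=> j_ge1; rewrite /Lambda ler_ln ?posrE ?ltr0n ?muln_gt0 ?leq_max ?j_ge1 //.
by rewrite ler_nat leq_pmulr // leq_max j_ge1.
Qed.

Lemma log2_maxn_le_Lambda j k : (1 <= j)%N ->
  (trunc_log 2 (maxn j k))%:R * ln 2 <= Lambda R j k.
Proof.
move=> j_ge1; have M_gt0 : (0 < maxn j k)%N by rewrite leq_max j_ge1.
apply: le_trans (log2_le_ln M_gt0) _.
by rewrite /Lambda ler_ln ?posrE ?ltr0n ?muln_gt0 ?M_gt0 // ler_nat leq_pmull.
Qed.

Lemma ln2_le_ln_inv eps : 0 < eps -> eps < 1 / 2 -> ln 2 <= ln (1 / eps).
Proof.
move=> eps_gt0 eps_lt; rewrite ler_ln ?posrE ?divr_gt0 //.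
by rewrite ler_pdivlMr //; lra.
Qed.

Lemma log2_le_ln_inv eps : 0 < eps -> eps < 1 / 2 ->
  (trunc_log 2 (Num.truncn (1 / eps)))%:R * ln 2 <= ln (1 / eps).
Proof.
move=> eps_gt0 eps_lt; have inv_ge0 : 0 <= 1 / eps by rewrite divr_ge0 // ltW.
have n_gt0 : (0 < Num.truncn (1 / eps))%N.
  by rewrite truncn_ge_nat // ler_pdivlMr //; lra.
apply: le_trans (log2_le_ln n_gt0) _.
by rewrite ler_ln ?posrE ?ltr0n ?divr_gt0 // truncn_le.
Qed.

Lemma depth_budget (l X Y : R) (a b : nat) : 0 < l ->
  a%:R * l <= X -> b%:R * l <= Y -> l <= X -> l <= Y ->
  (a + 3 + 2 * (b + 6) + 2 * (b + 6) ^ 2)%:R <=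
    (116 / l ^+ 3 + 7 / l ^+ 4) * X * Y ^+ 2.
Proof.
move=> l_gt0 aX bY lX lY; set A := X / l; set B := Y / l.
have A_ge1 : 1 <= A by rewrite ler_pdivlMr ?mul1r.
have B_ge1 : 1 <= B by rewrite ler_pdivlMr ?mul1r.
have aA : a%:R <= A by rewrite ler_pdivlMr.
have bB : b%:R <= B by rewrite ler_pdivlMr.
have -> : (116 / l ^+ 3 + 7 / l ^+ 4) * X * Y ^+ 2 =
    116 * A * B ^+ 2 + 7 * A * B ^+ 2 / l by rewrite /A /B; field; rewrite gt_eqF.
have -> : (a + 3 + 2 * (b + 6) + 2 * (b + 6) ^ 2)%:R =
    a%:R + 3 + 2 * (b%:R + 6) + 2 * (b%:R + 6) ^+ 2 :> R by ring.
have b_ge0 : 0 <= b%:R :> R by [].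
have : (b%:R + 6) ^+ 2 <= 49 * B ^+ 2 :> R by rewrite !expr2; nra.
have B_le_B2 : B <= B ^+ 2 by rewrite expr2; nra.
have : B ^+ 2 <= A * B ^+ 2 by nra.
have : A <= A * B ^+ 2 by nra.
have AB2_ge1 : 1 <= A * B ^+ 2 by nra.
have : 0 <= 7 * A * B ^+ 2 / l by rewrite divr_ge0 ?ltW //; nra.
lra.
Qed.

Lemma width_budget (l X Y : R) : 0 < l -> l <= X -> l <= Y ->
  7 <= (116 / l ^+ 3 + 7 / l ^+ 4) * X * Y ^+ 3.
Proof.
move=> l_gt0 lX lY; set A := X / l; set B := Y / l.
have A_ge1 : 1 <= A by rewrite ler_pdivlMr ?mul1r.
have B_ge1 : 1 <= B by rewrite ler_pdivlMr ?mul1r.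
have -> : (116 / l ^+ 3 + 7 / l ^+ 4) * X * Y ^+ 3 =
    116 * A * B ^+ 3 * l + 7 * A * B ^+ 3 by rewrite /A /B; field; rewrite gt_eqF.
have B3_ge1 : 1 <= B ^+ 3 by rewrite exprn_ege1.
have : 1 <= A * B ^+ 3 by nra.
have : 0 <= A * B ^+ 3 * l by rewrite mulr_ge0 ?ltW //; nra.
lra.
Qed.

End size_budget.

Theorem lemmaE2 (R : realType) :
  exists c : R, 0 < c /\
  forall (j k : nat) (eps : R), (1 <= j)%N -> (1 <= k)%N ->
    0 < eps -> eps < 1 / 2 ->
    exists N : relu_net R 2,
      (net_depth N)%:R <= c * Lambda R j k * ln (1 / eps) ^+ 2 /\
      (net_width N)%:R <= c * Lambda R j k * ln (1 / eps) ^+ 3 /\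
      (forall s t : R, 0 <= s <= 1 -> 0 <= t <= 1 ->
         `| fourier_psi j s * fourier_psi k t - net_eval N (pt2 s t) | <= eps).
Proof.
have ln2_gt0 : 0 < ln (2 : R) by rewrite ln_gt0 // ltr1n.
exists (116 / ln 2 ^+ 3 + 7 / ln 2 ^+ 4); split.
  by rewrite addr_gt0 // divr_gt0 // exprn_gt0.
move=> j k eps j_ge1 _ eps_gt0 eps_lt.
have [N [depthN widthN errN]] := fourier_product_net (R := R) j k (doublings_ge3 eps).
exists N; split; [|split].
- rewrite depthN; apply: depth_budget => //.
  + exact: log2_maxn_le_Lambda.
  + exact: log2_le_ln_inv.
  + exact: ln2_le_Lambda.
  + exact: ln2_le_ln_inv.
- have w7 := width_budget ln2_gt0 (ln2_le_Lambda k j_ge1) (ln2_le_ln_inv eps_gt0 eps_lt).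
  by apply: le_trans w7; rewrite ler_nat.
- move=> s t s01 t01.
  exact: le_trans (errN s t s01 t01) (doublings_err eps_gt0 eps_lt).
Qed.
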